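(* Assume (C1). Then for every $\kappa\in[p,+\infty]$, $\mathcal{D}$ is continuously embedded into $l^\kappa(\mathbb{Z},\mathbb{R})$, with $$\|u\|_{l^\kappa}\le b_0^{-1/p}\|u\|\quad\text{for all }u\in\mathcal{D}.$$ Moreover, for every $\kappa\in[p,+\infty]$ the embedding $\mathcal{D}\hookrightarrow l^\kappa(\mathbb{Z},\mathbb{R})$ is compact.
   Context: Fix real numbers $p,q,r$ with $1<p<q$, $\frac p2$ a positive integer, and $r\ge1$, and functions $a,b,c:\mathbb{Z}\to(0,+\infty)$. (C1): there is $b_0>0$ with $b(n)\ge b_0$ for all $n\in\mathbb{Z}$ and $\lim_{|n|\to\infty}b(n)=+\infty$. Notation and spaces: - $\Delta u(n)=u(n+1)-u(n)$. - $E$ is the set of real sequences $u=(u(n))_{n\in\mathbb{Z}}$ with $\|u\|:=\big(\sum_{n\in\mathbb{Z}}[a(n)|\Delta u(n)|^p+b(n)|u(n)|^p]\big)^{1/p}<\infty$. - $\mathcal{D}=\{u\in E:\sum_n c(n)|u(n)|^q\ln|u(n)|^r<+\infty\}$, where terms with $u(n)=0$ are read as $0$. It carries the norm $\|\cdot\|$. - For $1\le\kappa<\infty$, $l^\kappa(\mathbb{Z},\mathbb{R})$ is the space of real sequences with $\|u\|_{l^\kappa}=(\sum_n|u(n)|^\kappa)^{1/\kappa}<\infty$. - $l^\infty(\mathbb{Z},\mathbb{R})$ is the space of real sequences with $\|u\|_{l^\infty}=\sup_n|u(n)|<\infty$. *)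

From HB Require Import structures.
From mathcomp Require Import all_boot all_order all_algebra.
From mathcomp Require Import all_classical all_reals all_analysis.
Set Implicit Arguments. Unset Strict Implicit. Unset Printing Implicit Defensive.
Import Order.TTheory GRing.Theory Num.Theory.
Local Open Scope classical_set_scope.
Local Open Scope ring_scope.

Section Spaces.
Variable R : realType.

Definition sumZ (f : int -> R) : \bar R := \esum_(n in [set: int]) (f n)%:E.

Definition normE_pow (a b : int -> R) (p : R) (u : int -> R) : \bar R :=
  sumZ (fun n => a n * powR `|u (n + 1) - u n| p + b n * powR `|u n| p).

Definition in_E (a b : int -> R) (p : R) (u : int -> R) : Prop :=
  (normE_pow a b p u < +oo)%E.

(* ||u|| = (sum ...)^(1/p) (meaningful for u in E) *)
Definition normE (a b : int -> R) (p : R) (u : int -> R) : R :=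
  powR (fine (normE_pow a b p u)) p^-1.

(* D: u in E with sum_n c(n)|u(n)|^q ln(|u(n)|^r) convergent (absolutely);
   terms with u(n) = 0 count as 0. *)
Definition logterm (c : int -> R) (q r : R) (u : int -> R) (n : int) : R :=
  if u n == 0 then 0 else c n * powR `|u n| q * ln (powR `|u n| r).

Definition in_D (a b c : int -> R) (p q r : R) (u : int -> R) : Prop :=
  in_E a b p u /\ (sumZ (fun n => `|logterm c q r u n|%R) < +oo)%E.

Definition in_l (kappa : \bar R) (u : int -> R) : Prop :=
  match kappa with
  | EFin k => (sumZ (fun n => powR `|u n|%R k) < +oo)%E
  | +oo%E => exists M : R, forall n, `|u n| <= M
  | -oo%E => False
  end.

Definition lnorm (kappa : \bar R) (u : int -> R) : R :=
  match kappa with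
  | EFin k => powR (fine (sumZ (fun n => powR `|u n| k))) k^-1
  | +oo%E => sup [set `|u n| | n in [set: int]]
  | -oo%E => 0
  end.

End Spaces.

(* Since b >= b0, b0 * sum_n |u n|^p <= ||u||^p.  A finite l^p sum S bounds every |u n|
   by S^(1/p), hence sum_n |u n|^k <= S^((k-p)/p) * S for k >= p: this gives the
   embedding into every l^k, k in [p, +oo].  For compactness, a bounded sequence of D is
   bounded in each coordinate, so a diagonal argument yields a pointwise convergent
   subsequence, whose limit v still has sum_n b n |v n|^p bounded (Fatou).  As b -> +oo,
   the l^p mass of s_k - v outside a finite window |n| < N is uniformly small, and inside
   the window it tends to 0; the l^p convergence then gives l^k convergence. *)

From HB Require Import structures.
From mathcomp Require Import all_boot all_order all_algebra.
From mathcomp Require Import all_classical all_reals all_analysis.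
From mathcomp Require Import unstable.
From mathcomp Require Import zify.
Set Implicit Arguments. Unset Strict Implicit. Unset Printing Implicit Defensive.
Import Order.TTheory GRing.Theory Num.Theory.
Import numFieldNormedType.Exports.
Local Open Scope classical_set_scope.
Local Open Scope ring_scope.

Section sumZ_theory.
Variable R : realType.
Implicit Types (f g : int -> R) (c : R).

Lemma sumZ_ge0 f : (forall n, 0 <= f n) -> (0 <= sumZ f)%E.
Proof. by move=> f0; apply: esum_ge0 => n _; rewrite lee_fin. Qed.

Lemma le_sumZ f g : (forall n, f n <= g n) -> (sumZ f <= sumZ g)%E.
Proof. by move=> fg; apply: le_esum => n _; rewrite lee_fin. Qed.

Lemma sumZ_ge_term f n : (forall m, 0 <= f m) -> ((f n)%:E <= sumZ f)%E.
Proof.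
move=> f0; apply: esum_ge; exists [set n]; first by split; [exact: finite_set1|].
by rewrite fsbig_set1.
Qed.

Lemma sumZ_fineK f : (forall n, 0 <= f n) -> (sumZ f < +oo)%E ->
  (fine (sumZ f))%:E = sumZ f.
Proof. by move=> f0 fn; rewrite fineK // ge0_fin_numE // sumZ_ge0. Qed.

Lemma sumZD f g : (forall n, 0 <= f n) -> (forall n, 0 <= g n) ->
  sumZ (fun n => f n + g n) = (sumZ f + sumZ g)%E.
Proof.
move=> f0 g0; rewrite /sumZ; under eq_esum do rewrite EFinD.
by apply: esumD => n _; rewrite lee_fin.
Qed.

Lemma sumZ_scale_le c f : 0 <= c -> (forall n, 0 <= f n) ->
  (sumZ (fun n => (c * f n)%R) <= c%:E * sumZ f)%E.
Proof.
move=> c0 f0; rewrite /sumZ; under eq_esum do rewrite EFinM.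
apply: ge_ereal_sup => _ [X [finX _] <-].
rewrite -ge0_mule_fsumr => [|n]; last by rewrite lee_fin.
by rewrite lee_wpmul2l ?lee_fin //; apply: ereal_sup_ubound; exists X.
Qed.

Lemma sumZ_le_fsum_tail (F : set int) f g : finite_set F ->
  (forall n, 0 <= f n) -> (forall n, 0 <= g n) -> (forall n, ~ F n -> f n <= g n) ->
  (sumZ f <= (\sum_(n \in F) f n)%:E + sumZ g)%E.
Proof.
move=> finF f0 g0 fg; rewrite /sumZ (esumID F) => [|n _]; last by rewrite lee_fin.
rewrite setTI esum_fset // => [|n _]; last by rewrite lee_fin.
rewrite fsumEFin // leeD2l // setTI esum_mkcond.
by apply: le_esum => n _; case: ifPn => [/set_mem/fg|_]; rewrite lee_fin.
Qed.

Lemma sumZ_le_of_cvg (s : nat -> int -> R) f (K : R) :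
  (forall n, (fun k => s k n) @ \oo --> f n) -> (forall k n, 0 <= s k n) ->
  (forall k, (sumZ (s k) <= K%:E)%E) -> (sumZ f <= K%:E)%E.
Proof.
move=> sf s0 sK; apply: ge_ereal_sup => _ [X [finX _] <-].
rewrite fsumEFin //.
have cvgX : (fun k => \sum_(n \in X) s k n) @ \oo --> \sum_(n \in X) f n.
  rewrite fsbig_finite //; under eq_fun do rewrite fsbig_finite //.
  by apply: cvg_big => [|n _]; [exact: add_continuous|exact: sf].
rewrite lee_fin -(cvg_lim (@Rhausdorff R) cvgX); apply: limr_le; first exact: cvgP cvgX.
apply: nearW => k; rewrite -lee_fin -fsumEFin //; apply: le_trans (sK k).
by apply: esum_ge; exists X.
Qed.

End sumZ_theory.

Section powR_facts.
Variable R : realType.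
Implicit Types (p x y : R).

Lemma powRKV {p x} : p != 0 -> 0 <= x -> (x `^ p) `^ p^-1 = x.
Proof. by move=> p0 x0; rewrite -powRrM mulfV // powRr1. Qed.

Lemma powRVK {p x} : p != 0 -> 0 <= x -> (x `^ p^-1) `^ p = x.
Proof. by move=> p0 x0; rewrite -powRrM mulVf // powRr1. Qed.

Lemma ler_powRV p x y : 0 < p -> 0 <= x -> 0 <= y ->
  (x `^ p <= y) = (x <= y `^ p^-1).
Proof.
move=> p0 x0 y0; have pV0 : 0 <= p^-1 by rewrite invr_ge0 ltW.
apply/idP/idP => [/(ge0_ler_powR pV0)|/(ge0_ler_powR (ltW p0))].
  by rewrite powRKV ?gt_eqF //; apply; rewrite nnegrE ?powR_ge0.
by rewrite powRVK ?gt_eqF //; apply; rewrite nnegrE ?powR_ge0.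
Qed.

Lemma powR_normB_le p x y : 0 <= p ->
  `|x - y| `^ p <= 2 `^ p * (`|x| `^ p + `|y| `^ p).
Proof.
move=> p0; wlog xy : x y / `|y| <= `|x|.
  move=> wl; have [/wl//|/ltW/wl] := leP `|y| `|x|.
  by rewrite [`|y - x|]distrC [`|y| `^ p + _]addrC.
apply: (@le_trans _ _ (2 `^ p * `|x| `^ p)); last first.
  by rewrite ler_wpM2l ?powR_ge0 // lerDl powR_ge0.
rewrite -powRM //; apply: ge0_ler_powR; rewrite ?nnegrE ?mulr_ge0 //.
by apply: le_trans (ler_normB x y) _; rewrite mulr2n mulrDl mul1r lerD2l.
Qed.

Lemma continuous_normr_powR p : 0 < p -> continuous (fun x : R => `|x| `^ p).
Proof.
move=> p0 x; have [->|x0] := eqVneq x 0.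
  apply/cvgrPdist_lt => e e0; rewrite normr0 powR0 ?gt_eqF //.
  have [ep0 p0'] : 0 < e `^ p^-1 /\ p != 0 by rewrite powR_gt0 // gt_eqF.
  near=> y; rewrite sub0r normrN ger0_norm ?powR_ge0 //.
  rewrite -[e in _ < e](powRVK p0' (ltW e0)).
  apply: gt0_ltr_powR; rewrite ?nnegrE ?powR_ge0 //.
have /differentiable_continuous powRc : differentiable (fun a : R => a `^ p) `|x|.
  by apply/derivable1_diffP/derivable_powR; rewrite in_itv /= normr_gt0 x0.
by apply: (continuous_comp _ powRc); exact: norm_continuous.
Unshelve. all: end_near; exact: nbhs0_lt.
Qed.

Lemma cvg_normr_powR p (u : nat -> R) l : 0 < p ->
  u @ \oo --> l -> (fun k => `|u k| `^ p) @ \oo --> `|l| `^ p.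
Proof. by move=> p0 ul; exact: (continuous_cvg _ (@continuous_normr_powR p p0 l) ul). Qed.

Lemma cvg_fsum_normr_powR_sub0 p (F : set int) (s : nat -> int -> R) (v : int -> R) :
  0 < p -> finite_set F -> (forall n, (fun k => s k n) @ \oo --> v n) ->
  (fun k => \sum_(n \in F) `|s k n - v n| `^ p) @ \oo --> 0.
Proof.
move=> p0 finF sv.
rewrite -[X in _ --> X](_ : \sum_(n \in F) `|v n - v n| `^ p = 0); last first.
  by rewrite fsbig1 // => n _; rewrite subrr normr0 powR0 ?gt_eqF.
rewrite fsbig_finite //; under eq_fun do rewrite fsbig_finite //.
apply: cvg_big => [|n _]; first exact: add_continuous.
by apply: cvg_normr_powR => //; apply: cvgB; [exact: sv | exact: cvg_cst].
Qed.

End powR_facts.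

Definition lpsum {R : realType} (p : R) (u : int -> R) : \bar R :=
  sumZ (fun n => `|u n| `^ p).

Definition wlpsum {R : realType} (w : int -> R) (p : R) (u : int -> R) : \bar R :=
  sumZ (fun n => w n * `|u n| `^ p).

Section lp_embedding.
Variable R : realType.
Implicit Types (p k y : R) (u : int -> R).

Lemma lpsum_ge0 p u : (0 <= lpsum p u)%E.
Proof. by apply: sumZ_ge0 => n; exact: powR_ge0. Qed.

Lemma lpsum_fineK p u : (lpsum p u < +oo)%E -> (fine (lpsum p u))%:E = lpsum p u.
Proof. by apply: sumZ_fineK => n; exact: powR_ge0. Qed.

Lemma normr_le_lpsum p u n : 0 < p -> (lpsum p u < +oo)%E ->
  `|u n| <= fine (lpsum p u) `^ p^-1.
Proof.
move=> p0 uP; rewrite -ler_powRV ?fine_ge0 ?lpsum_ge0 //.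
by rewrite -lee_fin lpsum_fineK //; apply: sumZ_ge_term => m; exact: powR_ge0.
Qed.

Lemma lpsum_le_scale p k u y : 0 < p <= k -> (forall n, `|u n| <= y) ->
  (lpsum k u <= (y `^ (k - p))%:E * lpsum p u)%E.
Proof.
move=> /andP[p0 pk] uy.
apply: le_trans (sumZ_scale_le (powR_ge0 _ _) (fun n => powR_ge0 _ _)).
have k0 : k != 0 by rewrite gt_eqF // (lt_le_trans p0).
apply: le_sumZ => n /=.
have -> : `|u n| `^ k = `|u n| `^ (k - p) * `|u n| `^ p.
  by rewrite -powRD ?subrK // (negPf k0).
apply: ler_wpM2r; first exact: powR_ge0.
by apply: ge0_ler_powR; rewrite ?nnegrE ?subr_ge0 // (le_trans _ (uy 0)).
Qed.

Lemma lpsum_in_l p kappa u : 0 < p -> (p%:E <= kappa)%E -> (lpsum p u < +oo)%E ->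
  in_l kappa u /\ lnorm kappa u <= fine (lpsum p u) `^ p^-1.
Proof.
move=> p0 pk uP; set y := fine (lpsum p u) `^ p^-1.
have uy n : `|u n| <= y := normr_le_lpsum n p0 uP.
case: kappa pk => [k|_|//]; last first.
  split; first by exists y.
  by apply: ge_sup => [|_ [n _ <-]]; [exists `|u 0|, 0|exact: uy].
rewrite lee_fin => pk; have k0 : 0 < k := lt_le_trans p0 pk.
have ukP : (lpsum k u <= (y `^ k)%:E)%E.
  have p0k : 0 < p <= k by rewrite p0 pk.
  apply: le_trans (lpsum_le_scale p0k uy) _.
  rewrite -lpsum_fineK // -EFinM lee_fin.
  rewrite -[X in _ * X](@powRVK _ p) ?gt_eqF ?fine_ge0 ?lpsum_ge0 //.
  by rewrite -/y -powRD ?subrK // gt_eqF.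
have ukfin : (lpsum k u < +oo)%E by apply: le_lt_trans ukP (ltry _).
split; first exact: ukfin.
rewrite /lnorm -[y](@powRKV _ k) ?gt_eqF ?powR_ge0 //.
apply: ge0_ler_powR.
- by rewrite invr_ge0 ltW.
- by rewrite nnegrE fine_ge0 // lpsum_ge0.
- by rewrite nnegrE powR_ge0.
- by rewrite -lee_fin lpsum_fineK.
Qed.

Lemma normr_le_lnorm_infty u n : in_l +oo%E u -> `|u n| <= lnorm +oo%E u.
Proof.
move=> [M uM]; apply: ub_le_sup; last by exists n.
by exists M => _ [m _ <-]; exact: uM.
Qed.

Lemma lnorm_ge0 kappa u : in_l kappa u -> 0 <= lnorm kappa u.
Proof.
case: kappa => [k _|/(normr_le_lnorm_infty 0)|//]; first exact: powR_ge0.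
exact: le_trans.
Qed.

Lemma cvg_lnorm0 p kappa (w : nat -> int -> R) : 0 < p -> (p%:E <= kappa)%E ->
  (forall e, 0 < e -> \forall j \near \oo, (lpsum p (w j) <= e%:E)%E) ->
  (fun j => lnorm kappa (w j)) @ \oo --> 0.
Proof.
move=> p0 pk wP; apply/cvgrPdist_le => e e0.
have /wP : 0 < e `^ p by rewrite powR_gt0.
apply: filterS => j wk; have wfin : (lpsum p (w j) < +oo)%E := le_lt_trans wk (ltry _).
have [wl wle] := lpsum_in_l p0 pk wfin.
rewrite sub0r normrN ger0_norm ?lnorm_ge0 //; apply: le_trans wle _.
rewrite -[e in _ <= e](@powRKV _ p) ?gt_eqF ?(ltW e0) //.
apply: ge0_ler_powR; rewrite ?nnegrE ?invr_ge0 ?(ltW p0) ?fine_ge0 ?lpsum_ge0 ?powR_ge0 //.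
by rewrite -lee_fin lpsum_fineK.
Qed.

End lp_embedding.

Section weighted_space.
Variables (R : realType) (a b : int -> R) (p b0 : R).
Hypotheses (a_ge0 : forall n, 0 <= a n) (p_gt0 : 0 < p).
Hypotheses (b0_gt0 : 0 < b0) (b0_le_b : forall n, b0 <= b n).

Let b_ge0 n : 0 <= b n. Proof. exact: le_trans (ltW b0_gt0) (b0_le_b n). Qed.

Lemma lpsum_le_weighted u :
  (lpsum p u <= (b0^-1)%:E * wlpsum b p u)%E.
Proof.
have b0V_ge0 : 0 <= b0^-1 by rewrite invr_ge0 ltW.
apply: le_trans (sumZ_scale_le b0V_ge0 (fun n => mulr_ge0 (b_ge0 n) (powR_ge0 _ _))).
apply: le_sumZ => n; rewrite mulrA ler_peMl ?powR_ge0 //.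
by rewrite ler_pdivlMl // mulr1.
Qed.

Lemma weighted_le_normE_pow u :
  (wlpsum b p u <= normE_pow a b p u)%E.
Proof. by apply: le_sumZ => n; rewrite lerDr mulr_ge0 ?powR_ge0. Qed.

Lemma normE_ge0 u : 0 <= normE a b p u.
Proof. exact: powR_ge0. Qed.

Lemma normE_powE u : in_E a b p u -> normE_pow a b p u = (normE a b p u `^ p)%:E.
Proof.
have summand_ge0 n : 0 <= a n * `|u (n + 1) - u n| `^ p + b n * `|u n| `^ p.
  by rewrite addr_ge0 ?mulr_ge0 ?powR_ge0.
move=> uE; rewrite /normE powRVK ?gt_eqF ?fine_ge0 ?sumZ_ge0 //.
by rewrite sumZ_fineK.
Qed.

Lemma weighted_le_normE u M : in_E a b p u -> normE a b p u <= M ->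
  (wlpsum b p u <= (M `^ p)%:E)%E.
Proof.
move=> uE uM; apply: le_trans (weighted_le_normE_pow u) _.
rewrite normE_powE // lee_fin.
by apply: ge0_ler_powR; rewrite ?nnegrE ?normE_ge0 ?(le_trans (normE_ge0 u) uM) // ltW.
Qed.

Lemma lnorm_le_normE kappa u : (p%:E <= kappa)%E -> in_E a b p u ->
  in_l kappa u /\ lnorm kappa u <= b0 `^ (- p^-1) * normE a b p u.
Proof.
move=> pk uE; set N := normE a b p u.
have b0V_ge0 : 0 <= b0^-1 by rewrite invr_ge0 ltW.
have uP : (lpsum p u <= (b0^-1 * N `^ p)%:E)%E.
  apply: le_trans (lpsum_le_weighted u) _.
  by rewrite EFinM lee_wpmul2l ?lee_fin // weighted_le_normE.
have uPfin : (lpsum p u < +oo)%E := le_lt_trans uP (ltry _).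
have [ul ulP] := lpsum_in_l p_gt0 pk uPfin.
split=> //; apply: le_trans ulP _.
have -> : b0 `^ (- p^-1) * N = (b0^-1 * N `^ p) `^ p^-1.
  rewrite powRM ?powR_ge0 // powRKV ?gt_eqF ?normE_ge0 //.
  by rewrite -mulN1r powRrM powR_inv1 // ltW.
apply: ge0_ler_powR; rewrite ?nnegrE ?fine_ge0 ?lpsum_ge0 ?mulr_ge0 ?powR_ge0 //.
- by rewrite invr_ge0 ltW.
- by rewrite -lee_fin lpsum_fineK.
Qed.

End weighted_space.

Section nested_subsequences.
Variable psi : nat -> nat -> nat.
Hypothesis psi_incr : forall i, increasing_seq (psi i).
Hypothesis psiS :
  forall i, exists2 h : nat -> nat, increasing_seq h & psi i.+1 = psi i \o h.

Lemma nested_subseq i d :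
  exists2 h : nat -> nat, increasing_seq h & psi (i + d) = psi i \o h.
Proof.
elim: d => [|d [h h_incr hE]]; first by exists id; rewrite ?addn0.
have [h' h'_incr psiSE] := psiS (i + d); exists (h \o h'); last by rewrite addnS psiSE hE.
by move=> m n; rewrite /= h_incr -leEnat h'_incr.
Qed.

Lemma diagonal_increasing : increasing_seq (fun k => psi k k).
Proof.
apply/increasing_seqP => k; have [h h_incr ->] := psiS k.
(* psi k.+1 k.+1 = psi k (h k.+1) and k < k.+1 <= h k.+1. *)
by rewrite ltEnat /= leqW_mono ?mono_leq_infl.
Qed.

Lemma diagonal_tail i : exists2 m : nat -> nat,
  (forall k, (k <= m k)%N) & forall k, psi (k + i) (k + i) = psi i (m k).
Proof.
have /choice[m mP] k : exists mk, (k <= mk)%N /\ psi (k + i) (k + i) = psi i mk.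
  have [h h_incr] := nested_subseq i k; rewrite addnC => ->.
  exists (h (k + i)%N); split => //.
  exact: leq_trans (leq_addr i k) (mono_leq_infl h_incr _).
by exists m => k; have [] := mP k.
Qed.

End nested_subsequences.

Section diagonal_subsequence.
Variable R : realType.

Lemma cvgn_comp_infl (u : nat -> R) (m : nat -> nat) :
  (forall k, (k <= m k)%N) -> cvgn u -> cvgn (u \o m).
Proof.
move=> mk /cvg_ex[l ul]; apply/cvg_ex; exists l; apply: cvg_comp ul.
move=> P [N _ NP]; exists N => // k /= Nk; exact/NP/(leq_trans Nk (mk k)).
Qed.

Lemma diagonal_subseq_nat (f : nat -> nat -> R) :
  (forall j, exists C, forall k, `|f k j| <= C) ->
  exists2 phi : nat -> nat, increasing_seq phi & forall j, cvgn (fun k => f (phi k) j).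
Proof.
move=> fb.
have ext (g : nat -> nat) j :
    exists th : nat -> nat, increasing_seq th /\ cvgn (fun k => f (g (th k)) j).
  have [C fC] := fb j; have [th ? ?] : exists2 th : nat -> nat, increasing_seq th &
      cvgn ((fun k => f (g k) j) \o th).
    apply: bolzano_weierstrass; exists C; split; first by rewrite num_real.
    by move=> x Cx y _; rewrite /= (le_trans (fC _)) // ltW.
  by exists th.
have [Th ThP] := choice (fun gj : (nat -> nat) * nat => ext gj.1 gj.2).
(* psi j.+1 is a subsequence of psi j along which coordinate j converges. *)
pose psi := fix psi j := if j is j'.+1 then psi j' \o Th (psi j', j') else id.
have psiS j : exists2 h : nat -> nat, increasing_seq h & psi j.+1 = psi j \o h.
  by exists (Th (psi j, j)) => //; exact: (ThP _).1.
have psi_incr j : increasing_seq (psi j).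
  elim: j => [//|j IH]; have [h h_incr ->] := psiS j.
  by move=> m n; rewrite /= IH -leEnat h_incr.
exists (fun k => psi k k); first exact: diagonal_increasing.
move=> j; have /= [_ cvg_j] := ThP (psi j, j).
have [m mk mE] := diagonal_tail psiS j.+1.
have /cvg_ex[l ml] := cvgn_comp_infl mk cvg_j.
apply/cvg_ex; exists l; rewrite -(cvg_shiftn j.+1).
apply: cvg_trans ml; apply: near_eq_cvg; apply: nearW => k.
exact: (congr1 (f ^~ j) (esym (mE k))).
Qed.

Lemma diagonal_subseq (I : countType) (f : nat -> I -> R) :
  (forall i, exists C, forall k, `|f k i| <= C) ->
  exists2 phi : nat -> nat, increasing_seq phi & forall i, cvgn (fun k => f (phi k) i).
Proof.
move=> fb; pose g k j := if unpickle j is Some i then f k i else 0.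
have [|phi phi_incr g_cvg] := @diagonal_subseq_nat g.
  move=> j; rewrite /g; case: (unpickle j) => [i|]; first exact: fb.
  by exists 0 => k; rewrite normr0.
by exists phi => // i; have := g_cvg (pickle i); rewrite /g pickleK.
Qed.

End diagonal_subsequence.

Lemma finite_int_normr_lt (N : nat) : finite_set [set n : int | `|n| < N%:Z].
Proof.
apply: (sub_finite_set (B := (fun j : nat => j%:Z - N%:Z) @` `I_(N + N))).
  by move=> n /= nN; exists (absz (n + N%:Z)) => /=; lia.
exact/finite_image/finite_II.
Qed.

Section compact_embedding.
Variables (R : realType) (a b : int -> R) (p b0 : R).
Hypotheses (a_ge0 : forall n, 0 <= a n) (p_gt0 : 0 < p).
Hypotheses (b0_gt0 : 0 < b0) (b0_le_b : forall n, b0 <= b n).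
Hypothesis b_unbounded : forall M : R, exists N : nat, forall n : int,
  N%:Z <= `|n| -> M <= b n.

Let b_ge0 n : 0 <= b n. Proof. exact: le_trans (ltW b0_gt0) (b0_le_b n). Qed.

Lemma lpsum_sub_le_window (x y : int -> R) (B : R) (N : nat) : 0 < B ->
  (forall n, N%:Z <= `|n| -> B <= b n) ->
  (lpsum p (x - y)%R <= (\sum_(n \in [set n : int | `|n| < N%:Z]) `|x n - y n| `^ p)%:E
     + (2 `^ p / B)%:E * (wlpsum b p x + wlpsum b p y))%E.
Proof.
move=> B0 bB; have cB0 : 0 <= 2 `^ p / B by rewrite divr_ge0 ?powR_ge0 // ltW.
have bpow_ge0 (u : int -> R) n : 0 <= b n * `|u n| `^ p by rewrite mulr_ge0 ?powR_ge0.
apply: le_trans (sumZ_le_fsum_tail (g := fun n => 2 `^ p / B *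
    (b n * `|x n| `^ p + b n * `|y n| `^ p)) (finite_int_normr_lt N) _ _ _) _.
- by move=> n; exact: powR_ge0.
- by move=> n; rewrite mulr_ge0 // addr_ge0.
- move=> n /negP; rewrite -leNgt => Nn.
  apply: le_trans (powR_normB_le _ _ (ltW p_gt0)) _.
  rewrite -mulrDr mulrA ler_wpM2r ?addr_ge0 ?powR_ge0 //.
  by rewrite -mulrA ler_peMr ?powR_ge0 // ler_pdivlMl // mulr1 bB.
rewrite leeD2l //; apply: le_trans (sumZ_scale_le cB0 _) _.
  by move=> n; rewrite addr_ge0.
by rewrite sumZD.
Qed.

Lemma lpsum_sub_eventually_le (s : nat -> int -> R) (v : int -> R) (K : R) :
  (forall n, (fun k => s k n) @ \oo --> v n) ->
  (forall k, (wlpsum b p (s k) <= K%:E)%E) -> (wlpsum b p v <= K%:E)%E ->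
  forall e, 0 < e -> \forall k \near \oo, (lpsum p (s k - v)%R <= e%:E)%E.
Proof.
move=> sv sK vK e e0.
have K0 : 0 <= K.
  by rewrite -lee_fin (le_trans _ vK) // sumZ_ge0 // => n; rewrite mulr_ge0 ?powR_ge0.
pose d := e / 2; have d0 : 0 < d by rewrite divr_gt0.
pose B := 2 `^ p * (K + K) / d + 1.
have B0 : 0 < B.
  by rewrite ltr_pwDr // divr_ge0 ?(ltW d0) // mulr_ge0 ?powR_ge0 ?addr_ge0.
have tail_le : 2 `^ p / B * (K + K) <= d.
  rewrite mulrAC ler_pdivrMr // /B (mulrDr d) mulr1 [d * _]mulrC divfK ?gt_eqF //.
  by rewrite lerDl ltW.
have [N bB] := b_unbounded B.
have := cvg_fsum_normr_powR_sub0 p_gt0 (finite_int_normr_lt N) sv.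
move/cvgrPdist_le => /(_ d d0); apply: filterS => k.
rewrite sub0r normrN => /(le_trans (ler_norm _)) headk.
apply: le_trans (lpsum_sub_le_window (s k) v B0 bB) _.
rewrite [e]splitr EFinD leeD // ?lee_fin //.
apply: (le_trans _ (_ : ((2 `^ p / B) * (K + K))%:E <= d%:E)%E); last by rewrite lee_fin.
rewrite (EFinM (2 `^ p / B)) lee_wpmul2l ?lee_fin ?divr_ge0 ?powR_ge0 ?(ltW B0) //.
by rewrite EFinD leeD.
Qed.

Lemma compact_embedding kappa (s : nat -> int -> R) M : (p%:E <= kappa)%E ->
  (forall k, in_E a b p (s k)) -> (forall k, normE a b p (s k) <= M) ->
  exists phi : nat -> nat, (forall k, (phi k < phi k.+1)%N) /\
    exists v : int -> R, in_l kappa v /\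
      (fun k => lnorm kappa (s (phi k) - v)) @ \oo --> 0.
Proof.
move=> pk sE sM.
have sK k : (wlpsum b p (s k) <= (M `^ p)%:E)%E.
  exact: (weighted_le_normE a_ge0 p_gt0 b0_gt0 b0_le_b (sE k) (sM k)).
have s_bounded n : exists C, forall k, `|s k n| <= C.
  exists (b0 `^ (- p^-1) * M) => k.
  have [sl sle] := lnorm_le_normE a_ge0 p_gt0 b0_gt0 b0_le_b (leey p%:E) (sE k).
  apply: le_trans (normr_le_lnorm_infty n sl) (le_trans sle _).
  by rewrite ler_wpM2l ?powR_ge0.
have [phi phi_incr phi_cvg] := diagonal_subseq s_bounded.
pose v n := lim ((fun k => s (phi k) n) @ \oo).
have sv n : (fun k => s (phi k) n) @ \oo --> v n := phi_cvg n.
have vK : (wlpsum b p v <= (M `^ p)%:E)%E.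
  apply: (@sumZ_le_of_cvg _ (fun k n => b n * `|s (phi k) n| `^ p)) => [n|k n|k].
  - exact: cvgMl_tmp (cvg_normr_powR p_gt0 (sv n)).
  - by rewrite mulr_ge0 ?powR_ge0.
  - exact: sK.
have vP : (lpsum p v < +oo)%E.
  have b0V_ge0 : (0 <= (b0^-1)%:E)%E by rewrite lee_fin invr_ge0 ltW.
  apply: le_lt_trans (lpsum_le_weighted p b0_gt0 b0_le_b v) _.
  by apply: le_lt_trans (lee_wpmul2l b0V_ge0 vK) _; rewrite -EFinM ltry.
exists phi; split; first by move/increasing_seqP : phi_incr.
exists v; split; first exact: (lpsum_in_l p_gt0 pk vP).1.
apply: cvg_lnorm0 p_gt0 pk _.
exact: lpsum_sub_eventually_le sv (fun k => sK (phi k)) vK.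
Qed.

End compact_embedding.

Theorem lemma2p1 (R : realType) (p q r : R) (a b c : int -> R) (b0 : R)
  (hp1 : 1 < p) (hpq : p < q)
  (hp2 : exists m : nat, (0 < m)%N /\ p / 2 = m%:R)
  (hr : 1 <= r)
  (ha : forall n, 0 < a n) (hb : forall n, 0 < b n) (hc : forall n, 0 < c n)
  (* (C1) *)
  (hb0 : 0 < b0) (hbb0 : forall n, b0 <= b n)
  (hbinf : forall M : R, exists N : nat, forall n : int,
      (N%:Z <= `|n|)%R -> M <= b n) :
  forall kappa : \bar R, (p%:E <= kappa)%E ->
    (forall u : int -> R, in_D a b c p q r u ->
       in_l kappa u /\ lnorm kappa u <= powR b0 (- p^-1) * normE a b p u)
    /\
    (forall s : nat -> int -> R,
       (forall k, in_D a b c p q r (s k)) ->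
       (exists M : R, forall k, normE a b p (s k) <= M) ->
       exists phi : nat -> nat, (forall k, (phi k < phi k.+1)%N) /\
         exists v : int -> R, in_l kappa v /\
           (fun k => lnorm kappa (s (phi k) - v)) @ \oo --> 0).
Proof.
move=> kappa pk; have p_gt0 : 0 < p := lt_trans ltr01 hp1.
have a_ge0 n : 0 <= a n := ltW (ha n).
split=> [u [uE _]|s sD [M sM]].
  exact: (lnorm_le_normE a_ge0 p_gt0 hb0 hbb0 pk uE).
exact: (compact_embedding a_ge0 p_gt0 hb0 hbb0 hbinf pk (fun k => (sD k).1) sM).
Qed.
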